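(* Let $\Delta>\delta\geq 1$ be integers, and let $G$ be a graph with $n$ vertices, $m$ edges, maximum degree at most $\Delta$, and minimum degree at least $\delta$. If $\frac{2m}{n}\in\left[\delta,\ \frac{2\Delta\delta}{\Delta+\delta}\right]$, then $$irr(G)\leq 2\Delta m-\delta\Delta n.$$
   Context: All graphs are finite, simple and undirected. For a graph $G$ with edge set $E(G)$ and vertex degrees $d_G(u)$, the irregularity (in the sense of Albertson) is $irr(G)=\sum_{uv\in E(G)}|d_G(u)-d_G(v)|$. *)

From mathcomp Require Import all_boot all_order all_algebra.
Set Implicit Arguments. Unset Strict Implicit. Unset Printing Implicit Defensive.

Definition simple_graph (T : finType) (e : rel T) : Prop :=
  symmetric e /\ irreflexive e.

Definition deg (T : finType) (e : rel T) (x : T) : nat := #|[set y | e x y]|.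

Definition edges (T : finType) (e : rel T) : {set {set T}} :=
  [set [set x; y] | x in T, y in T & e x y].

(* Albertson irregularity: sum over edges uv of |d(u) - d(v)|,
   written as max minus min of the degrees of the two endpoints (S is nonempty, so the
   neutral element #|T| of minn is irrelevant). *)
Definition irr (T : finType) (e : rel T) : nat :=
  \sum_(S in edges e) ((\max_(x in S) deg e x) - (\big[minn/#|T|]_(x in S) deg e x)).

From mathcomp Require Import all_boot all_order all_algebra.
From mathcomp Require Import ring lra.
Import Order.TTheory GRing.Theory Num.Theory.

(* Count each edge from both ends, i.e. sum over the 2m darts (x, y). For degrees
   a = deg x and b = deg y in [d, D] one has |a - b| <= 2D - dD/a - dD/b, and summing
   this over all darts gives 2 irr(G) <= 2D * 2m - 2dDn: every vertex x is the tail
   (and the head) of exactly deg x darts, so the terms dD/deg x contribute dD per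
   vertex. *)

Lemma set2_eqE (T : finType) (x y u v : T) : x != y -> u != v ->
  ([set x; y] == [set u; v]) = ((x == u) && (y == v)) || ((x == v) && (y == u)).
Proof.
move=> xy uv; apply/eqP/idP => [E|]; last first.
  by case/orP=> /andP[/eqP -> /eqP ->]; rewrite // setUC.
have : x \in [set u; v] by rewrite -E !inE eqxx.
have : y \in [set u; v] by rewrite -E !inE eqxx orbT.
rewrite !inE.
by case/orP=> /eqP ?; case/orP=> /eqP ?; subst; rewrite ?eqxx ?orbT //= in xy *.
Qed.

Lemma big_minn_set2 (T : finType) (F : T -> nat) (k : nat) (x y : T) :
  (forall z, F z <= k)%N -> \big[minn/k]_(z in [set x; y]) F z = minn (F x) (F y).
Proof.
move=> Fk; rewrite -minEnat; apply/le_anti; rewrite le_min !bigmin_le_cond ?inE ?eqxx ?orbT //=.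
apply: le_bigmin => [|z]; first by rewrite ge_min leEnat Fk.
by rewrite !inE => /orP[] /eqP ->; rewrite ge_min lexx ?orbT.
Qed.

Section SimpleGraph.

Variables (T : finType) (e : rel T).
Hypothesis (e_sym : symmetric e) (e_irr : irreflexive e).

Lemma edge_neq {x y} : e x y -> x != y.
Proof. by apply: contraTneq => ->; rewrite e_irr. Qed.

Lemma card_darts_of_edge {x y} : e x y ->
  #|[pred p : T * T | e p.1 p.2 && ([set p.1; p.2] == [set x; y])]| = 2.
Proof.
move=> exy; have xy := edge_neq exy.
have -> : 2 = ((x, y) != (y, x)).+1 by rewrite -pair_eqE /= negb_and xy.
rewrite -cards2; apply: eq_card => -[u v]; rewrite !inE -!pair_eqE /=.
have [euv | neuv] := boolP (e u v); first by rewrite set2_eqE // edge_neq.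
apply/esym/negbTE; apply: contra neuv.
by case/orP=> /andP[/eqP -> /eqP ->]; rewrite // e_sym.
Qed.

Lemma sum_darts_edges (F : {set T} -> nat) :
  \sum_x \sum_(y | e x y) F [set x; y] = 2 * \sum_(S in edges e) F S.
Proof.
rewrite (pair_big_dep xpredT (fun x y => e x y) (fun x y => F [set x; y])) /=.
rewrite (partition_big (fun p : T * T => [set p.1; p.2]) (mem (edges e))) /=;
  last by move=> [x y] /= exy; apply: imset2_f; rewrite ?inE.
rewrite big_distrr /=; apply: eq_bigr => S /imset2P[x y _]; rewrite inE => exy ->.
rewrite (eq_bigr (fun _ => F [set x; y])); last by move=> p /andP[_ /eqP ->].
by rewrite sum_nat_const -(card_darts_of_edge exy) mulnC.
Qed.

Lemma handshake : \sum_x deg e x = 2 * #|edges e|.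
Proof.
rewrite -sum1_card -(sum_darts_edges (fun _ => 1)).
by apply: eq_bigr => x _; rewrite sum1_card /deg cardsE.
Qed.

Lemma irr_darts :
  2 * irr e = \sum_x \sum_(y | e x y) (maxn (deg e x) (deg e y) - minn (deg e x) (deg e y)).
Proof.
rewrite /irr -sum_darts_edges; apply: eq_bigr => x _; apply: eq_bigr => y exy.
rewrite big_setU1 /= ?inE ?edge_neq // big_set1 big_minn_set2 // => z.
by rewrite /deg max_card.
Qed.

Lemma sum_darts_tail (R : nmodType) (F : T -> R) :
  (\sum_x \sum_(y | e x y) F x = \sum_x F x *+ deg e x)%R.
Proof. by apply: eq_bigr => x _; rewrite sumr_const /deg cardsE. Qed.

Lemma sum_darts_head (R : nmodType) (F : T -> R) :
  (\sum_x \sum_(y | e x y) F y = \sum_x \sum_(y | e x y) F x)%R.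
Proof.
rewrite (exchange_big_dep xpredT) //=; apply: eq_bigr => y _.
by apply: eq_bigl => x; rewrite e_sym.
Qed.

End SimpleGraph.

Local Open Scope ring_scope.

Lemma natr_maxnBminn (R : numDomainType) (a b : nat) :
  (maxn a b - minn a b)%N%:R = `|a%:R - b%:R| :> R.
Proof.
wlog ab : a b / (a <= b)%N.
  by move=> H; case/orP: (leq_total a b) => /H; rewrite // maxnC minnC distrC.
by rewrite (maxn_idPr ab) (minn_idPl ab) natrB // distrC ger0_norm // subr_ge0 ler_nat.
Qed.

Lemma absB_le_bounds (R : realFieldType) (a b d D : R) :
  0 < d -> d <= a <= D -> d <= b <= D ->
  `|a - b| <= 2 * D - d * D / a - d * D / b.
Proof.
move=> d0; wlog ab : a b / a <= b.
  move=> H ha hb; case/orP: (le_total a b) => [ab|ba]; first exact: H.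
  by rewrite distrC addrAC; apply: H.
move=> /andP[da aD] /andP[db bD].
have a0 : 0 < a by apply: lt_le_trans da.
have b0 : 0 < b by apply: lt_le_trans db.
have -> : 2 * D - d * D / a - d * D / b = (2 * D * a * b - d * D * b - d * D * a) / (a * b).
  by field; rewrite ?gt_eqF.
rewrite ler_pdivlMr ?mulr_gt0 // distrC ger0_norm ?subr_ge0 // -subr_ge0.
have -> : 2 * D * a * b - d * D * b - d * D * a - (b - a) * (a * b)
  = a * ((b - a) * (D - b)) + D * ((a + b) * (a - d)) by ring.
have slack1 : 0 <= (b - a) * (D - b) by rewrite mulr_ge0 // subr_ge0.
have slack2 : 0 <= (a + b) * (a - d) by rewrite mulr_ge0 ?subr_ge0 // addr_ge0 // ltW.
by rewrite addr_ge0 // mulr_ge0 // ltW // (lt_le_trans d0 (le_trans da aD)).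
Qed.

Theorem proposition2 (T : finType) (e : rel T) (Delta delta : nat) :
  simple_graph e ->
  (1 <= delta)%N -> (delta < Delta)%N ->
  (0 < #|T|)%N ->
  (forall x : T, deg e x <= Delta)%N ->
  (forall x : T, delta <= deg e x)%N ->
  (delta * #|T| <= 2 * #|edges e|)%N ->
  (2 * #|edges e| * (Delta + delta) <= 2 * Delta * delta * #|T|)%N ->
  ((irr e)%:Z <= (2 * Delta * #|edges e|)%:Z - (delta * Delta * #|T|)%:Z)%R.
Proof.
move=> [e_sym e_irr] delta_gt0 _ _ degD degd _ _.
rewrite lerBrDr -PoszD lez_nat -(ler_nat rat) natrD !natrM.
set m := #|edges e|; set n := #|T|.
pose d_ x : rat := (deg e x)%:R; pose c : rat := delta%:R * Delta%:R.
have d_gt0 x : 0 < d_ x by rewrite ltr0n (leq_trans delta_gt0).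
have d_bounds x : delta%:R <= d_ x <= Delta%:R by rewrite !ler_nat degd degD.
have sum_inv : \sum_x \sum_(y | e x y) c / d_ x = c * n%:R.
  rewrite sum_darts_tail (eq_bigr (fun=> c)) ?sumr_const ?mulr_natr // => x _.
  by rewrite -mulr_natr divfK ?gt_eqF.
have two_irr :
    (2 * irr e)%N%:R <= \sum_x \sum_(y | e x y) (2 * Delta%:R - c / d_ x - c / d_ y).
  rewrite irr_darts // natr_sum; apply: ler_sum => x _; rewrite natr_sum.
  apply: ler_sum => y _; rewrite natr_maxnBminn.
  by apply: absB_le_bounds; rewrite ?ltr0n ?d_bounds.
have sum_const : \sum_x \sum_(y | e x y) 2 * Delta%:R = 2 * Delta%:R * (2 * m)%N%:R :> rat.
  rewrite sum_darts_tail -handshake // natr_sum mulr_sumr.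
  by apply: eq_bigr => x _; rewrite [RHS]mulr_natr.
move: two_irr; under eq_bigr => x _ do rewrite !sumrB.
rewrite !sumrB sum_const sum_darts_head // sum_inv !natrM /c; lra.
Qed.
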